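(* Let $c$ be a cell of the basic hexagonal model and $\mathcal{N}_c$ its set of direct neighbours. If $N=\{n\in\mathcal{N}_c:\tau(n)<\tau(c)\}$, then $\tau_N(c)=\tau(c)$.
   Context: In the basic hexagonal model each cell $c$ has initial non-negative integer values $x(c,0)$ (resistance) and $y(c,0)$ (fuel); direct neighbours are cells sharing an edge. The ignition time $\tau(c)\in\mathbb{N}\cup\{\infty\}$ of $c$ is the moment $c$ ignites, and it satisfies $\tau(c)=\min\{t\in\mathbb{N}: x(c,0)\le\sum_{n\in\mathcal{N}_c}\max(0,\min(t-\tau(n),y(n,0)))\}$, where the minimum of the empty set is $\infty$ and $t-\infty=-\infty$. For a subset $N\subseteq\mathcal{N}_c$, the predicted ignition time is $\tau_N(c)=\min\{t\in\mathbb{N}: x(c,0)\le\sum_{n\in N}\max(0,\min(t-\tau(n),y(n,0)))\}$ (again $\infty$ if the set is empty), i.e. the time at which $c$ would ignite if the cells of $N$ were its only neighbours. *)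

From mathcomp Require Import all_boot all_order all_algebra.
Set Implicit Arguments. Unset Strict Implicit. Unset Printing Implicit Defensive.

(* Cells of the hexagonal grid in axial coordinates (q, r). *)
Definition cell := (int * int)%type.

Definition hex_nbrs (c : cell) : seq cell :=
  let: (q, r) := c in
  [:: ((q + 1)%R, r); ((q - 1)%R, r); (q, (r + 1)%R); (q, (r - 1)%R);
      ((q + 1)%R, (r - 1)%R); ((q - 1)%R, (r + 1)%R)].

(* Times in N ∪ {∞}: [Some t] is the finite time t, [None] is ∞. *)
Definition time := option nat.

Definition time_lt (a b : time) : bool :=
  match a, b with
  | Some m, Some n => m < n
  | Some _, None => true
  | None, _ => false
  end.

(* max(0, min(t - tau_n, y_n)), with t - ∞ = -∞ (so the term is 0).
   For a finite tau_n = s, max(0, min(t - s, y)) = min(t -_N s, y) since y >= 0,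
   where -_N is truncated subtraction. *)
Definition contrib (t : nat) (taun : time) (yn : nat) : nat :=
  match taun with
  | Some s => minn (t - s) yn
  | None => 0
  end.

(* [is_first P o] : o = min { t in N | P t }, with min of the empty set = ∞. *)
Definition is_first (P : nat -> Prop) (o : time) : Prop :=
  match o with
  | Some t => P t /\ (forall s, s < t -> ~ P s)
  | None => forall t, ~ P t
  end.

(* Predicted ignition time tau_N(c) for a subset N of the neighbours of c
   (N given as a predicate; only neighbours of c satisfying N are counted). *)
Definition pred_ignition (tau : cell -> time) (x y : cell -> nat)
    (c : cell) (N : pred cell) (o : time) : Prop :=
  is_first (fun t => x c <= \sum_(n <- hex_nbrs c | N n) contrib t (tau n) (y n)) o.

Definition ignition_times (tau : cell -> time) (x y : cell -> nat) : Prop :=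
  forall c, pred_ignition tau x y c predT (tau c).

From mathcomp Require Import all_boot all_order all_algebra.
From mathcomp Require Import zify.

(* A neighbour n with tau(c) <= tau(n) contributes nothing up to time tau(c),
   so up to that time the sum over N equals the sum over all neighbours; the
   first time the threshold x(c) is reached is therefore the same. *)

Lemma time_nlt_trans {a b d : time} :
  ~~ time_lt a b -> ~~ time_lt b d -> ~~ time_lt a d.
Proof. by case: a b d => [a|] [b|] [d|] //=; lia. Qed.

Lemma contrib_eq0 (t : nat) (taun : time) (yn : nat) :
  ~~ time_lt taun (Some t) -> contrib t taun yn = 0.
Proof.
by case: taun => [s|] //=; rewrite -leqNgt -subn_eq0 => /eqP ->; rewrite min0n.
Qed.

Lemma is_first_ext_upto (P Q : nat -> Prop) (o : time) :
  (forall t, ~~ time_lt o (Some t) -> P t <-> Q t) ->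
  is_first P o -> is_first Q o.
Proof.
case: o => [T|] /= PQ.
- have {}PQ t : t <= T -> P t <-> Q t by rewrite leqNgt; apply: PQ.
  move=> [PT minT]; split; first exact/PQ.
  by move=> s ltsT /(PQ s (ltnW ltsT)); apply: minT.
- by move=> noP t Qt; apply: (noP t); apply/PQ.
Qed.

Theorem lemma5 (x y : cell -> nat) (tau : cell -> time)
    (Htau : ignition_times tau x y) (c : cell) :
  pred_ignition tau x y c (fun n => time_lt (tau n) (tau c)) (tau c).
Proof.
apply: is_first_ext_upto (Htau c) => t not_after_t.
rewrite (big_rmcond _ _ (P := fun n => time_lt (tau n) (tau c))) //.
move=> n not_before; apply: contrib_eq0.
exact: time_nlt_trans not_before not_after_t.
Qed.
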